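(* Let $(A,\mu,\alpha,\beta)$ be a BiHom-associative algebra (with $\mu(a\otimes b)=a\cdot b$) and let $r=\sum_i x_i\otimes y_i\in A\otimes A$ satisfy $(\alpha\otimes\alpha)(r)=r=(\beta\otimes\beta)(r)$. Define $\Delta_r:A\to A\otimes A$ by $\Delta_r(a)=\sum_i\alpha(x_i)\otimes y_i\cdot a-\sum_i a\cdot x_i\otimes\beta(y_i)$. Then $(\alpha\otimes\alpha)\circ\Delta_r=\Delta_r\circ\alpha$, $(\beta\otimes\beta)\circ\Delta_r=\Delta_r\circ\beta$, and, writing $\Delta_r(a)=a_1\otimes a_2$, for all $a,b\in A$: \[ \Delta_r(a\cdot b)=\alpha(a)\cdot b_1\otimes\beta(b_2)+\alpha(a_1)\otimes a_2\cdot\beta(b). \]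
   Context: Work over a field. A BiHom-associative algebra is a 4-tuple $(A,\mu,\alpha,\beta)$ with $\alpha,\beta:A\to A$ commuting linear maps, multiplicative for $\mu$, and $\alpha(x)\cdot(y\cdot z)=(x\cdot y)\cdot\beta(z)$ for all $x,y,z$. *)

From mathcomp Require Import all_boot all_algebra.
Set Implicit Arguments. Unset Strict Implicit. Unset Printing Implicit Defensive.
Import GRing.Theory.
Local Open Scope ring_scope.

Definition bilinear_map (K : fieldType) (U V W : lmodType K) (f : U -> V -> W) : Prop :=
  (forall v, linear (fun u => f u v)) /\ (forall u, linear (f u)).

Definition BiHomAssoc (K : fieldType) (A : lmodType K)
    (mu : A -> A -> A) (alpha beta : A -> A) : Prop :=
  bilinear_map mu /\ linear alpha /\ linear beta /\
  (forall x, alpha (beta x) = beta (alpha x)) /\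
  (forall x y, alpha (mu x y) = mu (alpha x) (alpha y)) /\
  (forall x y, beta (mu x y) = mu (beta x) (beta y)) /\
  (forall x y z, mu (alpha x) (mu y z) = mu (mu x y) (beta z)).

(* Elements of A (x) A are represented by finite formal sums
   sum_i x_i (x) y_i, i.e. lists of pairs; two such represent the same
   tensor iff they agree under every bilinear map into every K-vector
   space (universal property of the tensor product). *)
Definition tensor (K : fieldType) (A : lmodType K) := seq (A * A).

Definition teq (K : fieldType) (A : lmodType K) (s t : tensor A) : Prop :=
  forall (V : lmodType K) (f : A -> A -> V), bilinear_map f ->
    \sum_(p <- s) f p.1 p.2 = \sum_(p <- t) f p.1 p.2.

Definition tmap (K : fieldType) (A : lmodType K) (f g : A -> A) (s : tensor A)
  : tensor A := [seq (f p.1, g p.2) | p <- s].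

Definition Delta_r (K : fieldType) (A : lmodType K)
    (mu : A -> A -> A) (alpha beta : A -> A) (r : tensor A) (a : A) : tensor A :=
  [seq (alpha p.1, mu p.2 a) | p <- r] ++ [seq (- mu a p.1, beta p.2) | p <- r].

From mathcomp Require Import all_boot all_algebra.
Set Implicit Arguments. Unset Strict Implicit. Unset Printing Implicit Defensive.
Import GRing.Theory.
Local Open Scope ring_scope.

(* Pair every tensor with an arbitrary bilinear map f.  Both sides of each
   identity then become differences of sums over the terms x_i (x) y_i of r,
   and the invariance of r under alpha (x) alpha and beta (x) beta lets one
   replace x_i (x) y_i by alpha x_i (x) alpha y_i (resp. beta x_i (x) beta y_i)
   inside such sums.  After these substitutions BiHom-associativity identifies
   the terms of Delta_r (a b) with those of the right-hand side, the two cross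
   terms alpha a alpha x_i (x) beta (y_i b) cancelling. *)

Section LinearMaps.
Variable K : fieldType.

Lemma linear_funN (U V : lmodType K) (f : U -> V) :
  linear f -> forall u, f (- u) = - f u.
Proof. by move=> /scalable_linear fZ u; rewrite -scaleN1r fZ /= scaleN1r. Qed.

Lemma bilinear_mapNl (U W : lmodType K) (f : U -> U -> W) :
  bilinear_map f -> forall u v, f (- u) v = - f u v.
Proof. by move=> [fl _] u v; apply: (linear_funN (fl v)). Qed.

Lemma linear_comp (U V W : lmodType K) (f : V -> W) (g : U -> V) :
  linear f -> linear g -> linear (fun u => f (g u)).
Proof. by move=> lf lg a u v; rewrite lg lf. Qed.

Lemma bilinear_map_comp (U V W : lmodType K) (f : U -> U -> W) (phi psi : V -> U) :
  bilinear_map f -> linear phi -> linear psi ->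
  bilinear_map (fun u v => f (phi u) (psi v)).
Proof.
move=> [fl fr] lphi lpsi; split=> w.
  exact: linear_comp (fl (psi w)) lphi.
exact: linear_comp (fr (phi w)) lpsi.
Qed.

End LinearMaps.

Section DeltaR.
Variables (K : fieldType) (A : lmodType K).
Variables (mu : A -> A -> A) (alpha beta : A -> A) (r : tensor A).
Hypotheses (mu_bilinear : bilinear_map mu)
           (alpha_linear : linear alpha) (beta_linear : linear beta).

Local Notation Delta := (Delta_r mu alpha beta r).

Lemma teq_tmap_sum (phi psi : A -> A) (s : tensor A) :
  teq (tmap phi psi s) s ->
  forall (V : lmodType K) (f : A -> A -> V), bilinear_map f ->
  \sum_(p <- s) f (phi p.1) (psi p.2) = \sum_(p <- s) f p.1 p.2.
Proof. by move=> inv V f fb; rewrite -(inv V f fb) big_map. Qed.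

Lemma sum_Delta_r (V : lmodType K) (f : A -> A -> V) (a : A) :
  bilinear_map f ->
  \sum_(p <- Delta a) f p.1 p.2 =
  \sum_(p <- r) f (alpha p.1) (mu p.2 a) - \sum_(p <- r) f (mu a p.1) (beta p.2).
Proof.
move=> fb; rewrite big_cat !big_map /= -sumrN.
by congr (_ + _); apply: eq_bigr => p _; rewrite bilinear_mapNl.
Qed.

Lemma sum_map_Delta_r (phi psi : A -> A) (V : lmodType K) (f : A -> A -> V) (a : A) :
  linear phi -> linear psi -> bilinear_map f ->
  \sum_(p <- [seq (phi q.1, psi q.2) | q <- Delta a]) f p.1 p.2 =
  \sum_(p <- r) f (phi (alpha p.1)) (psi (mu p.2 a))
  - \sum_(p <- r) f (phi (mu a p.1)) (psi (beta p.2)).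
Proof.
move=> lphi lpsi fb; rewrite big_map.
exact: (sum_Delta_r (f := fun u v => f (phi u) (psi v)) a
                    (bilinear_map_comp fb lphi lpsi)).
Qed.

Lemma tmap_Delta_r (gamma : A -> A) :
  linear gamma -> (forall x y, gamma (mu x y) = mu (gamma x) (gamma y)) ->
  (forall x, gamma (alpha x) = alpha (gamma x)) ->
  (forall x, gamma (beta x) = beta (gamma x)) ->
  teq (tmap gamma gamma r) r ->
  forall a, teq (tmap gamma gamma (Delta a)) (Delta (gamma a)).
Proof.
move=> lgamma gammaM gamma_alpha gamma_beta inv a V f fb.
rewrite sum_map_Delta_r // sum_Delta_r //; congr (_ - _).
  rewrite -(teq_tmap_sum inv (f := fun u v => f (alpha u) (mu v (gamma a))));
    last exact: bilinear_map_comp fb alpha_linear (mu_bilinear.1 _).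
  by apply: eq_bigr => p _; rewrite gammaM gamma_alpha.
rewrite -(teq_tmap_sum inv (f := fun u v => f (mu (gamma a) u) (beta v)));
  last exact: bilinear_map_comp fb (mu_bilinear.2 _) beta_linear.
by apply: eq_bigr => p _; rewrite gammaM gamma_beta.
Qed.

Hypotheses (alphaM : forall x y, alpha (mu x y) = mu (alpha x) (alpha y))
           (betaM : forall x y, beta (mu x y) = mu (beta x) (beta y))
           (bihom_assoc : forall x y z, mu (alpha x) (mu y z) = mu (mu x y) (beta z)).

Lemma Delta_r_mul :
  teq (tmap alpha alpha r) r -> teq (tmap beta beta r) r ->
  forall a b, teq (Delta (mu a b))
    ([seq (mu (alpha a) p.1, beta p.2) | p <- Delta b]
     ++ [seq (alpha p.1, mu p.2 (beta b)) | p <- Delta a]).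
Proof.
move=> alpha_inv beta_inv a b V f fb.
rewrite sum_Delta_r // big_cat /=.
rewrite (sum_map_Delta_r b (mu_bilinear.2 _) beta_linear fb).
rewrite (sum_map_Delta_r a alpha_linear (mu_bilinear.1 _) fb).
have -> : \sum_(p <- r) f (alpha (alpha p.1)) (mu (mu p.2 a) (beta b)) =
          \sum_(p <- r) f (alpha p.1) (mu p.2 (mu a b)).
  rewrite -(teq_tmap_sum alpha_inv (f := fun u v => f (alpha u) (mu v (mu a b))));
    last exact: bilinear_map_comp fb alpha_linear (mu_bilinear.1 _).
  by apply: eq_bigr => p _; rewrite bihom_assoc.
have -> : \sum_(p <- r) f (mu (alpha a) (mu b p.1)) (beta (beta p.2)) =
          \sum_(p <- r) f (mu (mu a b) p.1) (beta p.2).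
  rewrite -(teq_tmap_sum beta_inv (f := fun u v => f (mu (mu a b) u) (beta v)));
    last exact: bilinear_map_comp fb (mu_bilinear.2 _) beta_linear.
  by apply: eq_bigr => p _; rewrite bihom_assoc.
have -> : \sum_(p <- r) f (alpha (mu a p.1)) (mu (beta p.2) (beta b)) =
          \sum_(p <- r) f (mu (alpha a) (alpha p.1)) (beta (mu p.2 b)).
  by apply: eq_bigr => p _; rewrite alphaM betaM.
by rewrite addrC addrA subrK.
Qed.

End DeltaR.

Theorem proposition5p2 (K : fieldType) (A : lmodType K)
    (mu : A -> A -> A) (alpha beta : A -> A) (r : tensor A) :
  BiHomAssoc mu alpha beta ->
  teq (tmap alpha alpha r) r -> teq (tmap beta beta r) r ->
  [/\ (forall a, teq (tmap alpha alpha (Delta_r mu alpha beta r a))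
                     (Delta_r mu alpha beta r (alpha a))),
      (forall a, teq (tmap beta beta (Delta_r mu alpha beta r a))
                     (Delta_r mu alpha beta r (beta a))) &
      (forall a b, teq (Delta_r mu alpha beta r (mu a b))
         ([seq (mu (alpha a) p.1, beta p.2) | p <- Delta_r mu alpha beta r b]
          ++ [seq (alpha p.1, mu p.2 (beta b)) | p <- Delta_r mu alpha beta r a]))].
Proof.
move=> [muB [la [lb [alpha_beta [alphaM [betaM assoc]]]]]] alpha_inv beta_inv.
split=> [a | a | a b].
- exact: (tmap_Delta_r muB la lb la alphaM (fun _ => erefl) alpha_beta alpha_inv a).
- exact: (tmap_Delta_r muB la lb lb betaM (fun x => esym (alpha_beta x))
                       (fun _ => erefl) beta_inv a).
- exact: (Delta_r_mul muB la lb alphaM betaM assoc alpha_inv beta_inv a b).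
Qed.
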